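(* Let $(V,\langle\cdot,\cdot\rangle)$ be a Hilbert space and $Q\subset V$ a set of points with $M_Q:=\sup\{\|\mathbf v\|:\mathbf v\in Q\}<\infty$ and $-Q=Q$. Let $\epsilon>0$, and let $f:V\to\mathbb R^k$ be a linear map satisfying $$(1-\epsilon)\|\mathbf v_1-\mathbf v_2\|^2\le\|f(\mathbf v_1)-f(\mathbf v_2)\|^2\le(1+\epsilon)\|\mathbf v_1-\mathbf v_2\|^2\quad\text{for all }\mathbf v_1,\mathbf v_2\in Q,$$ where the norm on $\mathbb R^k$ is induced by a fixed inner product, and let $f^*:\mathbb R^k\to V$ be the adjoint with respect to these inner products. Then for all $\mathbf w_1,\mathbf w_2\in\mathrm{span}\{Q\}$, $$|\langle\mathbf w_1,(\mathbb I_V-f^*\circ f)(\mathbf w_2)\rangle|\le\epsilon M_Q^2\|\mathbf w_1\|_Q\|\mathbf w_2\|_Q.$$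
   Context: For a subset $Q$ of a normed space, $\|\mathbf v\|_Q=\inf\{\sum_j|\lambda_j|:\sum_j\lambda_j\mathbf v_j=\mathbf v,\ \mathbf v_j\in Q\}$ (infimum over finite linear combinations of elements of $Q$), defined on $\mathrm{span}\{Q\}$. $\mathbb I_V$ is the identity of $V$. *)

From HB Require Import structures.
From mathcomp Require Import all_boot all_order all_algebra.
From mathcomp Require Import all_classical all_reals.
Set Implicit Arguments. Unset Strict Implicit. Unset Printing Implicit Defensive.
Import Order.TTheory GRing.Theory Num.Theory.
Local Open Scope classical_set_scope.
Local Open Scope ring_scope.

Record is_inner_product (R : realType) (V : lmodType R) (ip : V -> V -> R) : Prop := {
  ip_sym : forall u v, ip u v = ip v u;
  ip_linear : forall (a : R) u v w, ip (a *: u + v) w = a * ip u w + ip v w;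
  ip_pos : forall v, 0 <= ip v v;
  ip_def : forall v, ip v v = 0 -> v = 0
}.

Definition ipnorm (R : realType) (V : lmodType R) (ip : V -> V -> R) (v : V) : R :=
  Num.sqrt (ip v v).

Record is_hilbert (R : realType) (V : lmodType R) (ip : V -> V -> R) : Prop := {
  hilbert_ip : is_inner_product ip;
  hilbert_complete : forall u : nat -> V,
    (forall e : R, 0 < e -> exists N : nat, forall m n : nat,
        (N <= m)%N -> (N <= n)%N -> ipnorm ip (u m - u n) < e) ->
    exists l : V, forall e : R, 0 < e -> exists N : nat, forall n : nat,
        (N <= n)%N -> ipnorm ip (u n - l) < e
}.

Definition Qcoefs (R : realType) (V : lmodType R) (Q : set V) (v : V) : set R :=
  [set r | exists (n : nat) (lam : 'I_n -> R) (vs : 'I_n -> V),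
      (forall i, Q (vs i)) /\ \sum_(i < n) lam i *: vs i = v /\
      r = \sum_(i < n) `|lam i|].

Definition in_span (R : realType) (V : lmodType R) (Q : set V) (v : V) : Prop :=
  Qcoefs Q v !=set0.

Definition Qnorm (R : realType) (V : lmodType R) (Q : set V) (v : V) : R :=
  inf (Qcoefs Q v).

From HB Require Import structures.
From mathcomp Require Import all_boot all_order all_algebra.
From mathcomp Require Import all_classical all_reals.
From mathcomp Require Import lra.
Import Order.TTheory GRing.Theory Num.Theory.
Local Open Scope classical_set_scope.
Local Open Scope ring_scope.

Set Implicit Arguments. Unset Strict Implicit. Unset Printing Implicit Defensive.

(* The quantity to bound is d(w1, w2), where
   d(u, v) := <u, v> - <f u, f v> is the "defect" of f; by the adjoint
   identity <w1, (I - f* f) w2> = d(w1, w2), and d is a symmetric bilinear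
   form.  The near-isometry hypothesis says |d(x, x)| <= eps |x|^2 for every
   difference x of two points of Q; since Q = -Q this covers v - u and v + u
   for v, u in Q, so polarization 4 d(v, u) = d(v+u, v+u) - d(v-u, v-u) and
   the parallelogram law give |d(v, u)| <= eps/2 (|v|^2 + |u|^2) <= eps M_Q^2.
   Bilinearity spreads this bound over finite combinations
   w1 = sum lam_i v_i, w2 = sum mu_j u_j as eps M_Q^2 (sum|lam_i|)(sum|mu_j|),
   and taking infima over both representations yields the Q-norms. *)

Lemma linear_comb_sum (R : realType) (V : lmodType R) (h : V -> R) :
  (forall (a : R) u v, h (a *: u + v) = a * h u + h v) ->
  forall n (a : 'I_n -> R) (x : 'I_n -> V),
    h (\sum_(i < n) a i *: x i) = \sum_(i < n) a i * h (x i).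
Proof.
move=> hl n a x.
have h0 : h 0 = 0 by have := hl 1 0 0; rewrite scale1r addr0 mul1r => H; lra.
have hD : {morph h : u v / u + v} by move=> u v; have := hl 1 u v; rewrite scale1r mul1r.
rewrite (big_morph h hD h0); apply: eq_bigr => i _.
by rewrite -[_ *: _]addr0 hl h0 addr0.
Qed.

Section InnerProductAlgebra.
Variables (R : realType) (V : lmodType R) (ip : V -> V -> R).
Hypothesis ip_ok : is_inner_product ip.

Lemma ipDl u v w : ip (u + v) w = ip u w + ip v w.
Proof. by have := ip_linear ip_ok 1 u v w; rewrite scale1r mul1r. Qed.

Lemma ipZl (a : R) u w : ip (a *: u) w = a * ip u w.
Proof.
have ip0 : ip 0 w = 0 by have := ipDl 0 0 w; rewrite addr0 => H; lra.
by rewrite -[_ *: _]addr0 (ip_linear ip_ok) ip0 addr0.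
Qed.

Lemma ipNl u w : ip (- u) w = - ip u w.
Proof. by rewrite -scaleN1r ipZl mulN1r. Qed.

Lemma ipDr u v w : ip w (u + v) = ip w u + ip w v.
Proof. by rewrite !(ip_sym ip_ok w) ipDl. Qed.

Lemma ipNr u w : ip w (- u) = - ip w u.
Proof. by rewrite !(ip_sym ip_ok w) ipNl. Qed.

Lemma ipnorm_sqr v : ipnorm ip v ^+ 2 = ip v v.
Proof. by rewrite /ipnorm sqr_sqrtr // (ip_pos ip_ok). Qed.

Lemma ip_parallelogram u v :
  ip (v + u) (v + u) + ip (v - u) (v - u) = 2 * (ip v v + ip u u).
Proof. rewrite !(ipDl, ipDr, ipNl, ipNr) (ip_sym ip_ok u v); lra. Qed.

End InnerProductAlgebra.

Section Defect.
Variables (R : realType) (V : lmodType R) (ip : V -> V -> R).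
Variables (k : nat) (ipk : 'rV[R]_k -> 'rV[R]_k -> R) (f : {linear V -> 'rV[R]_k}).
Hypotheses (ip_ok : is_inner_product ip) (ipk_ok : is_inner_product ipk).

Definition defect (u v : V) : R := ip u v - ipk (f u) (f v).

Lemma defect_sym u v : defect u v = defect v u.
Proof. by rewrite /defect (ip_sym ip_ok) (ip_sym ipk_ok). Qed.

Lemma defect_linear v (a : R) x y :
  defect (a *: x + y) v = a * defect x v + defect y v.
Proof.
rewrite /defect linearD linearZ /= !(ip_linear ip_ok, ip_linear ipk_ok); lra.
Qed.

Lemma defect_polarization v u :
  4 * defect v u = defect (v + u) (v + u) - defect (v - u) (v - u).
Proof.
have dD x y w : defect (x + y) w = defect x w + defect y w.
  by have := defect_linear w 1 x y; rewrite scale1r mul1r.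
have dDr x y w : defect w (x + y) = defect w x + defect w y.
  by rewrite !(defect_sym w) dD.
have dN x w : defect (- x) w = - defect x w.
  have d0 : defect 0 w = 0 by have := dD 0 0 w; rewrite addr0 => H; lra.
  by have := defect_linear w (-1) x 0; rewrite addr0 scaleN1r d0 addr0 mulN1r.
have dNr x w : defect w (- x) = - defect w x by rewrite !(defect_sym w) dN.
rewrite !(dD, dDr, dN, dNr) (defect_sym u v); lra.
Qed.

Lemma defect_diag_bound (eps : R) x :
  (1 - eps) * ipnorm ip x ^+ 2 <= ipnorm ipk (f x) ^+ 2 <= (1 + eps) * ipnorm ip x ^+ 2 ->
  `|defect x x| <= eps * ip x x.
Proof.
by rewrite /defect (ipnorm_sqr ip_ok) (ipnorm_sqr ipk_ok) ler_norml => /andP[? ?];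
  apply/andP; split; lra.
Qed.

(* Polarization and the parallelogram law turn diagonal bounds at v + u and
   v - u into a bound on the off-diagonal defect. *)
Lemma defect_offdiag_bound (eps : R) v u :
  `|defect (v + u) (v + u)| <= eps * ip (v + u) (v + u) ->
  `|defect (v - u) (v - u)| <= eps * ip (v - u) (v - u) ->
  `|defect v u| <= eps / 2 * (ip v v + ip u u).
Proof.
move=> Hp Hm.
have Hpol := defect_polarization v u; have Hpar := ip_parallelogram ip_ok u v.
move: Hp Hm; rewrite !ler_norml => /andP[? ?] /andP[? ?].
apply/andP; split; nra.
Qed.

End Defect.

Lemma bilinear_comb_bound (R : realType) (V : lmodType R) (g : V -> V -> R)
    (Q : set V) (C : R) :
  (forall v (a : R) x y, g (a *: x + y) v = a * g x v + g y v) ->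
  (forall u v, g u v = g v u) ->
  (forall v u, Q v -> Q u -> `|g v u| <= C) ->
  forall n (lam : 'I_n -> R) (vs : 'I_n -> V) m (mu : 'I_m -> R) (us : 'I_m -> V),
    (forall i, Q (vs i)) -> (forall j, Q (us j)) ->
    `|g (\sum_(i < n) lam i *: vs i) (\sum_(j < m) mu j *: us j)|
      <= C * (\sum_(i < n) `|lam i|) * (\sum_(j < m) `|mu j|).
Proof.
move=> gl gs gQ n lam vs m mu us Qv Qu.
rewrite (linear_comb_sum (gl _)).
under eq_bigr => i _ do rewrite gs (linear_comb_sum (gl _)).
apply: le_trans (ler_norm_sum _ _ _) _.
rewrite mulrAC mulrC mulr_suml; apply: ler_sum => i _.
rewrite normrM; apply: ler_pM => //.
rewrite mulr_sumr; apply: le_trans (ler_norm_sum _ _ _) _.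
apply: ler_sum => j _; rewrite normrM mulrC; apply: ler_pM => //.
by rewrite gs; apply: gQ.
Qed.

Lemma Qcoefs_ge0 (R : realType) (V : lmodType R) (Q : set V) v r :
  Qcoefs Q v r -> 0 <= r.
Proof. by move=> [n [lam [vs [_ [_ ->]]]]]; apply: sumr_ge0. Qed.

Lemma Qnorm_ge0 (R : realType) (V : lmodType R) (Q : set V) v :
  in_span Q v -> 0 <= Qnorm Q v.
Proof. by move=> Sv; apply: lb_le_inf => // r /Qcoefs_ge0. Qed.

Lemma le_mul_inf (R : realType) (A : set R) (X c : R) :
  A !=set0 -> 0 <= c -> (forall a, A a -> X <= c * a) -> X <= c * inf A.
Proof.
move=> [a0 Aa0] c0 H.
have [c_eq0|cn0] := eqVneq c 0.
  by have := H a0 Aa0; rewrite c_eq0 !mul0r.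
have cp : 0 < c by rewrite lt0r cn0.
rewrite -ler_pdivrMl //; apply: lb_le_inf; first by exists a0.
by move=> a Aa; rewrite ler_pdivrMl //; exact: H.
Qed.

Lemma le_mul_Qnorm (R : realType) (V : lmodType R) (Q : set V) (X C : R) w1 w2 :
  in_span Q w1 -> in_span Q w2 -> 0 <= C ->
  (forall r1 r2, Qcoefs Q w1 r1 -> Qcoefs Q w2 r2 -> X <= C * r1 * r2) ->
  X <= C * Qnorm Q w1 * Qnorm Q w2.
Proof.
move=> S1 S2 C0 H; apply: le_mul_inf => //.
  by apply: mulr_ge0 => //; exact: Qnorm_ge0.
move=> r2 H2; rewrite mulrAC; apply: le_mul_inf => //.
  by apply: mulr_ge0 => //; exact: Qcoefs_ge0 H2.
by move=> r1 H1; rewrite mulrAC; apply: H.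
Qed.

Theorem mainTheorem6 (R : realType) (V : lmodType R) (ip : V -> V -> R)
  (k : nat) (ipk : 'rV[R]_k -> 'rV[R]_k -> R)
  (Q : set V) (eps : R)
  (f : {linear V -> 'rV[R]_k}) (fstar : 'rV[R]_k -> V) :
  is_hilbert ip ->
  is_inner_product ipk ->
  has_ubound [set ipnorm ip v | v in Q] ->
  [set - v | v in Q] = Q ->
  0 < eps ->
  (forall v1 v2, Q v1 -> Q v2 ->
     (1 - eps) * ipnorm ip (v1 - v2) ^+ 2 <= ipnorm ipk (f v1 - f v2) ^+ 2 /\
     ipnorm ipk (f v1 - f v2) ^+ 2 <= (1 + eps) * ipnorm ip (v1 - v2) ^+ 2) ->
  (forall (v : V) (y : 'rV[R]_k), ipk (f v) y = ip v (fstar y)) ->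
  forall w1 w2 : V, in_span Q w1 -> in_span Q w2 ->
    `| ip w1 (w2 - fstar (f w2)) | <=
      eps * (sup [set ipnorm ip v | v in Q]) ^+ 2 * Qnorm Q w1 * Qnorm Q w2.
Proof.
move=> [ip_ok _] ipk_ok Hub HQ eps_gt0 Hf Hadj w1 w2 S1 S2.
set M := sup _.
have QM v : Q v -> ip v v <= M ^+ 2.
  move=> Qv; have vM : ipnorm ip v <= M by apply: ub_le_sup => //; exists v.
  by rewrite -(ipnorm_sqr ip_ok) !expr2 ler_pM // sqrtr_ge0.
have diag v u : Q v -> Q u -> `|defect ip ipk f (v - u) (v - u)| <= eps * ip (v - u) (v - u).
  move=> Qv Qu; apply: defect_diag_bound => //.
  by have [? ?] := Hf v u Qv Qu; rewrite linearB /=; apply/andP.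
have onQ v u : Q v -> Q u -> `|defect ip ipk f v u| <= eps * M ^+ 2.
  move=> Qv Qu; have Qnu : Q (- u) by rewrite -HQ; exists u.
  apply: le_trans (defect_offdiag_bound (eps := eps) ip_ok ipk_ok _ _) _.
  - by have := diag v (- u) Qv Qnu; rewrite opprK.
  - exact: diag.
  - have := QM v Qv; have := QM u Qu; nra.
have -> : ip w1 (w2 - fstar (f w2)) = defect ip ipk f w1 w2.
  by rewrite /defect Hadj (ipDr ip_ok) (ipNr ip_ok).
apply: le_mul_Qnorm => //; first by apply: mulr_ge0; [exact: ltW | exact: sqr_ge0].
move=> r1 r2 [n [lam [vs [Qv [<- ->]]]]] [m [mu [us [Qu [<- ->]]]]].
by apply: (bilinear_comb_bound (defect_linear f ip_ok ipk_ok) (defect_sym f ip_ok ipk_ok) onQ).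
Qed.
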